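(* For all integers $n,k$ with $0\leqslant k\leqslant n-1$, \begin{align*} \sum_{m=k}^{n-1}(-1)^{n+m}\frac{2m+1}{(n-m)(n+m+1)} &= -\psi(2n+1)+\psi(n+k+1)+\psi(n+1)-\psi(n-k+1)\\ &\quad -\psi\left(\left\lfloor\frac{n+k}{2}\right\rfloor+1\right) +\psi\left(\left\lfloor\frac{n-k}{2}\right\rfloor+1\right). \end{align*}
   Context: $\psi=\Gamma'/\Gamma$ is the digamma function; $\lfloor x\rfloor$ denotes the greatest integer not exceeding $x$. *)

From Stdlib Require Import Reals.
From Coquelicot Require Import Coquelicot.
Open Scope R_scope.

Definition euler_gamma : R :=
  real (Lim_seq (fun N : nat =>
          sum_n_m (fun j : nat => / INR j) 1 (S N) - ln (INR (S N)))).

(* Digamma function psi = Gamma'/Gamma, via its standard series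
   representation  psi(x) = -gamma + sum_{j>=0} (1/(j+1) - 1/(j+x)),
   valid for x not a non-positive integer (we only use x >= 1). *)
Definition digamma (x : R) : R :=
  - euler_gamma + Series (fun j : nat => / INR (S j) - / (INR j + x)).

(* Both sides are differences of harmonic numbers: psi (a + 1) = H_a - gamma, and
   H_{floor((a+1)/2)} - H_{floor(a/2)} = (1 - (-1)^a) / (a + 1).  With these, the
   right-hand side F(k) satisfies F(k) - F(k+1) = (-1)^(n+k) (1/(n-k) - 1/(n+k+1)),
   which is the k-th summand, and F(n) = 0, so the sum telescopes. *)
From Stdlib Require Import Reals Lra Lia.
From Coquelicot Require Import Coquelicot.
Open Scope R_scope.

Fixpoint harmonic (a : nat) : R :=
  match a with
  | O => 0
  | S p => harmonic p + / INR (S p)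
  end.

Lemma sum_n_m_telescope (F : nat -> R) (k m : nat) :
  (k <= S m)%nat -> sum_n_m (fun j => F j - F (S j)) k m = F k - F (S m).
Proof.
  induction m as [|m IHm]; intros hk.
  - destruct (Nat.eq_dec k 1) as [->|hk_ne].
    + rewrite sum_n_m_zero by lia. unfold zero; simpl. ring.
    + replace k with 0%nat by lia. rewrite sum_n_n. reflexivity.
  - destruct (Nat.eq_dec k (S (S m))) as [->|hk_ne].
    + rewrite sum_n_m_zero by lia. unfold zero; simpl. ring.
    + rewrite sum_n_Sm, IHm by lia. unfold plus; simpl. ring.
Qed.

Lemma is_series_inv_shift_telescope (c : R) :
  0 < c -> is_series (fun j => / (INR j + c) - / (INR j + c + 1)) (/ c).
Proof.
  intros hc.
  set (G := fun j : nat => / (INR j + c)).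
  assert (HG : forall j, / (INR j + c) - / (INR j + c + 1) = G j - G (S j)).
  { intros j. unfold G. rewrite S_INR. do 2 f_equal. ring. }
  assert (Hlim : is_lim_seq (fun N => G (S N)) 0).
  { apply (is_lim_seq_incr_1 G). unfold G.
    apply (is_lim_seq_inv _ p_infty); [|discriminate].
    apply (is_lim_seq_le_p_loc INR); [exists 0%nat; intros; lra | apply is_lim_seq_INR]. }
  enough (Hsum : is_lim_seq (sum_n (fun j => / (INR j + c) - / (INR j + c + 1))) (/ c))
    by exact Hsum.
  apply (is_lim_seq_ext (fun N => G 0%nat - G (S N))).
  - intros N. unfold sum_n. rewrite (sum_n_m_ext _ (fun j => G j - G (S j))) by apply HG.
    symmetry. apply sum_n_m_telescope. lia.
  - replace (/ c) with (G 0%nat - 0) by (unfold G; simpl; rewrite Rplus_0_l; ring).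
    apply (is_lim_seq_minus _ _ (G 0%nat) 0); [apply is_lim_seq_const | exact Hlim | ].
    reflexivity.
Qed.

Lemma is_series_digamma_nat_succ (a : nat) :
  is_series (fun j : nat => / INR (S j) - / (INR j + (INR a + 1))) (harmonic a).
Proof.
  induction a as [|a IHa].
  - apply (is_series_ext (fun _ => zero)).
    + intros j. rewrite S_INR. simpl. replace (INR j + (0 + 1)) with (INR j + 1) by ring.
      unfold zero; simpl. ring.
    + enough (H0 : is_lim_seq (sum_n (fun _ => zero)) 0) by exact H0.
      apply (is_lim_seq_ext (fun _ => 0)); [|apply is_lim_seq_const].
      intros N. symmetry. exact (sum_n_m_const_zero 0 N).
  - assert (Ha : 0 < INR a + 1) by (pose proof (pos_INR a); lra).
    replace (harmonic (S a)) with (plus (harmonic a) (/ (INR a + 1)))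
      by (cbn [harmonic]; rewrite S_INR; reflexivity).
    eapply is_series_ext;
      [|exact (is_series_plus _ _ _ _ IHa (is_series_inv_shift_telescope _ Ha))].
    intros j. rewrite !S_INR. unfold plus; simpl.
    replace (INR j + (INR a + 1 + 1)) with (INR j + (INR a + 1) + 1) by ring. ring.
Qed.

Lemma digamma_nat_succ (a : nat) : digamma (INR a + 1) = - euler_gamma + harmonic a.
Proof.
  unfold digamma. rewrite (is_series_unique _ _ (is_series_digamma_nat_succ a)).
  reflexivity.
Qed.

Lemma harmonic_succ_half (a : nat) :
  harmonic (S a / 2) - harmonic (a / 2) = (1 - (-1) ^ a) / INR (S a).
Proof.
  destruct (Nat.Even_or_Odd a) as [[q ->]|[q ->]].
  - replace (S (2 * q) / 2)%nat with q by (apply Nat.div_unique with 1%nat; lia).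
    replace (2 * q / 2)%nat with q by (apply Nat.div_unique with 0%nat; lia).
    rewrite pow_1_even. field. apply not_0_INR. lia.
  - replace (S (2 * q + 1) / 2)%nat with (S q) by (apply Nat.div_unique with 0%nat; lia).
    replace ((2 * q + 1) / 2)%nat with q by (apply Nat.div_unique with 1%nat; lia).
    rewrite Nat.add_1_r, pow_1_odd. cbn [harmonic].
    replace (INR (S (S (2 * q)))) with (2 * INR (S q)) by (rewrite !S_INR, mult_INR; simpl; ring).
    field. apply not_0_INR. lia.
Qed.

Lemma pow_m1_sub_succ (n k : nat) :
  (k < n)%nat -> (-1) ^ (n - S k) = - (-1) ^ (n + k).
Proof.
  intros hk.
  replace (n + k)%nat with (n - S k + S (2 * k))%nat by lia.
  rewrite pow_add, pow_1_odd. ring.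
Qed.

Definition harmonic_closed_form (n k : nat) : R :=
  - harmonic (2 * n) + harmonic (n + k) + harmonic n - harmonic (n - k)
  - harmonic ((n + k) / 2) + harmonic ((n - k) / 2).

Lemma harmonic_closed_form_diag (n : nat) : harmonic_closed_form n n = 0.
Proof.
  unfold harmonic_closed_form.
  replace (n + n)%nat with (2 * n)%nat by lia. rewrite Nat.sub_diag.
  replace (2 * n / 2)%nat with n by (apply Nat.div_unique with 0%nat; lia).
  simpl. ring.
Qed.

Lemma harmonic_closed_form_sub_succ (n k : nat) :
  (k < n)%nat ->
  harmonic_closed_form n k - harmonic_closed_form n (S k)
  = (-1) ^ (n + k) * (2 * INR k + 1) / ((INR n - INR k) * (INR n + INR k + 1)).
Proof.
  intros hk. unfold harmonic_closed_form.
  replace (n + S k)%nat with (S (n + k)) by lia.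
  replace (n - k)%nat with (S (n - S k)) by lia.
  pose proof (harmonic_succ_half (n + k)) as Hplus.
  pose proof (harmonic_succ_half (n - S k)) as Hminus.
  rewrite pow_m1_sub_succ in Hminus by exact hk.
  cbn [harmonic].
  assert (Eplus : INR (S (n + k)) = INR n + INR k + 1) by (rewrite S_INR, plus_INR; ring).
  assert (Eminus : INR (S (n - S k)) = INR n - INR k)
    by (rewrite <- minus_INR by lia; f_equal; lia).
  rewrite Eplus, Eminus in *.
  assert (Hn_minus_k : INR n - INR k <> 0) by (rewrite <- Eminus; apply not_0_INR; lia).
  assert (Hn_plus_k : INR n + INR k + 1 <> 0) by (rewrite <- Eplus; apply not_0_INR; lia).
  replace (harmonic (S (n + k) / 2))
    with (harmonic ((n + k) / 2) + (1 - (-1) ^ (n + k)) / (INR n + INR k + 1)) by lra.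
  replace (harmonic (S (n - S k) / 2))
    with (harmonic ((n - S k) / 2) + (1 - - (-1) ^ (n + k)) / (INR n - INR k)) by lra.
  field. split; assumption.
Qed.

Lemma sum_n_m_alternating_eq_closed_form (n k : nat) :
  (k < n)%nat ->
  sum_n_m (fun m : nat =>
      (-1) ^ (n + m) * (2 * INR m + 1) / ((INR n - INR m) * (INR n + INR m + 1)))
    k (n - 1)
  = harmonic_closed_form n k.
Proof.
  intros hk.
  rewrite (sum_n_m_ext_loc _ (fun j => harmonic_closed_form n j - harmonic_closed_form n (S j)))
    by (intros j hj; symmetry; apply harmonic_closed_form_sub_succ; lia).
  rewrite sum_n_m_telescope by lia.
  replace (S (n - 1)) with n by lia.
  rewrite harmonic_closed_form_diag. apply Rminus_0_r.
Qed.

Lemma harmonic_closed_form_eq_digamma (n k : nat) :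
  (k <= n)%nat ->
  harmonic_closed_form n k
  = - digamma (2 * INR n + 1) + digamma (INR n + INR k + 1) + digamma (INR n + 1)
    - digamma (INR n - INR k + 1)
    - digamma (INR ((n + k) / 2) + 1) + digamma (INR ((n - k) / 2) + 1).
Proof.
  intros hk.
  replace (2 * INR n) with (INR (2 * n)) by (rewrite mult_INR; reflexivity).
  rewrite <- plus_INR, <- minus_INR by exact hk.
  rewrite !digamma_nat_succ.
  unfold harmonic_closed_form. ring.
Qed.

Theorem mainTheorem4 (n k : nat) (hk : (k <= n - 1)%nat) (hn : (1 <= n)%nat) :
  sum_n_m (fun m : nat =>
      (-1) ^ (n + m) * (2 * INR m + 1) / ((INR n - INR m) * (INR n + INR m + 1)))
    k (n - 1)
  = - digamma (2 * INR n + 1) + digamma (INR n + INR k + 1) + digamma (INR n + 1)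
    - digamma (INR n - INR k + 1)
    - digamma (INR ((n + k) / 2) + 1) + digamma (INR ((n - k) / 2) + 1).
Proof.
  rewrite <- harmonic_closed_form_eq_digamma by lia.
  apply sum_n_m_alternating_eq_closed_form. lia.
Qed.
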